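(* Let $K$ be a finite field, $G$ a finite group and $C$ a right ideal of the group algebra $KG$. Then $C$ is checkable if and only if the orthogonal space $C^\perp$ (with respect to the standard bilinear form on $KG$) is a principal right ideal of $KG$.
   Context: $KG$ is the group algebra with $K$-basis $\{g: g\in G\}$. It carries the symmetric nondegenerate bilinear form $\langle\cdot,\cdot\rangle$ defined by $\langle g,h\rangle=\delta_{g,h}$ for $g,h\in G$, and $C^\perp=\{a\in KG:\langle a,c\rangle=0 \text{ for all } c\in C\}$. For $C\subseteq KG$, $\operatorname{ann}_r(C)=\{a\in KG: ca=0 \ \forall c\in C\}$. A right ideal $I\le KG$ is called checkable if there is $v\in KG$ with $I=\{a\in KG: va=0\}=\operatorname{ann}_r(KGv)$. *)

From HB Require Import structures.
From mathcomp Require Import all_boot all_order all_algebra all_fingroup.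
Set Implicit Arguments. Unset Strict Implicit. Unset Printing Implicit Defensive.
Import GRing.Theory.
Local Open Scope ring_scope.

(* The group algebra KG: K-valued functions on the (finite) group gT,
   an element a is identified with \sum_g a g * g. *)
Definition KG (K : finFieldType) (gT : finGroupType) := {ffun gT -> K}.

Definition gmul (K : finFieldType) (gT : finGroupType) (a b : {ffun gT -> K})
  : {ffun gT -> K} :=
  [ffun g : gT => \sum_(h : gT) a h * b ((h^-1) * g)%g].

(* standard bilinear form <g,h> = delta_{g,h} *)
Definition gform (K : finFieldType) (gT : finGroupType) (a b : {ffun gT -> K}) : K :=
  \sum_(g : gT) a g * b g.

Definition is_right_ideal (K : finFieldType) (gT : finGroupType)
  (C : {set {ffun gT -> K}}) : Prop :=
  [/\ 0 \in C,
      (forall x y, x \in C -> y \in C -> x + y \in C) &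
      (forall c a, c \in C -> gmul c a \in C)].

Definition perp (K : finFieldType) (gT : finGroupType) (C : {set {ffun gT -> K}})
  : {set {ffun gT -> K}} :=
  [set a | [forall c in C, gform a c == 0]].

Definition checkable (K : finFieldType) (gT : finGroupType)
  (I : {set {ffun gT -> K}}) : Prop :=
  exists v : {ffun gT -> K}, I = [set a | gmul v a == 0].

Definition principal_right_ideal (K : finFieldType) (gT : finGroupType)
  (D : {set {ffun gT -> K}}) : Prop :=
  exists u : {ffun gT -> K}, D = [set gmul u a | a : {ffun gT -> K}].

From HB Require Import structures.
From mathcomp Require Import all_boot all_order all_algebra all_fingroup.
Set Implicit Arguments. Unset Strict Implicit. Unset Printing Implicit Defensive.
Import GRing.Theory.
Local Open Scope ring_scope.

(* Write u* for the element g |-> u (g^-1) of KG.  The standard form satisfies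
   the adjunction  <a, u x> = <u* a, x>, and it is nondegenerate, so the
   orthogonal of the principal right ideal u KG is the annihilator
   {a | u* a = 0}.  Hence "C is an annihilator" and "C is orthogonal to a
   principal right ideal" say the same thing, and the theorem reduces to the
   double-orthogonal law  perp (perp W) = W  for every K-subspace W of KG
   (right ideals and principal right ideals are subspaces).

   The double-orthogonal law is linear algebra: identifying KG with row
   vectors of length #|G|, a subspace is the row space of a matrix A, its
   orthogonal is the row space of  kermx A^T, and
   kermx (kermx A^T)^T  has the same row space as A by a rank count. *)

Lemma double_kermx_tr (F : fieldType) (m n : nat) (A : 'M[F]_(m, n)) :
  (A == kermx (kermx A^T)^T)%MS.
Proof.
have A_sub : (A <= kermx (kermx A^T)^T)%MS.
  by rewrite sub_kermx -[_ *m _]trmxK trmx_mul trmxK mulmx_ker trmx0.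
have rank_eq : \rank (kermx (kermx A^T)^T) = \rank A.
  by rewrite !mxrank_ker !mxrank_tr mxrank_ker mxrank_tr subKn ?rank_leq_col.
by rewrite -(mxrank_leqif_eq A_sub).2 rank_eq.
Qed.

Section GroupAlgebra.
Variables (K : finFieldType) (gT : finGroupType).
Implicit Types (a b c u v x y : {ffun gT -> K}) (k : K) (g h : gT).

Definition scalef k a : {ffun gT -> K} := [ffun g => k * a g].

Definition delta (g : gT) : {ffun gT -> K} := [ffun h => (h == g)%:R].

Definition ginv u : {ffun gT -> K} := [ffun g => u (g^-1)%g].

Lemma ginvK u : ginv (ginv u) = u.
Proof. by apply/ffunP => g; rewrite !ffunE invgK. Qed.

Definition principal u : {set {ffun gT -> K}} := [set gmul u a | a : {ffun gT -> K}].
Definition annihilator v : {set {ffun gT -> K}} := [set a | gmul v a == 0].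

Definition is_subspace (W : {set {ffun gT -> K}}) : Prop :=
  [/\ 0 \in W, (forall x y, x \in W -> y \in W -> x + y \in W) &
      (forall k x, x \in W -> scalef k x \in W)].

Lemma gmul0r u : gmul u 0 = 0.
Proof. by apply/ffunP => g; rewrite !ffunE big1 // => h _; rewrite ffunE mulr0. Qed.

Lemma gmulDr u x y : gmul u (x + y) = gmul u x + gmul u y.
Proof.
apply/ffunP => g; rewrite !ffunE -big_split; apply: eq_bigr => h _.
by rewrite ffunE mulrDr.
Qed.

Lemma gmulZr u k x : gmul u (scalef k x) = scalef k (gmul u x).
Proof.
apply/ffunP => g; rewrite !ffunE mulr_sumr; apply: eq_bigr => h _.
by rewrite ffunE mulrCA.
Qed.

Lemma gmul_delta1 u : gmul u (delta 1%g) = u.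
Proof.
apply/ffunP => g; rewrite ffunE (bigD1 g) //= big1 ?addr0.
  by rewrite ffunE mulVg eqxx mulr1.
by move=> h /negbTE neq_hg; rewrite ffunE -eq_mulVg1 neq_hg mulr0.
Qed.

(* Every right ideal is a subspace: k c = c (k delta 1). *)
Lemma right_ideal_subspace (C : {set {ffun gT -> K}}) :
  is_right_ideal C -> is_subspace C.
Proof.
case=> C0 CD CM; split=> // k c Cc.
by rewrite -(gmul_delta1 c) -gmulZr; apply: CM.
Qed.

Lemma principal_subspace u : is_subspace (principal u).
Proof.
split.
- by apply/imsetP; exists 0; rewrite ?gmul0r.
- move=> _ _ /imsetP [x _ ->] /imsetP [y _ ->].
  by apply/imsetP; exists (x + y); rewrite ?gmulDr.
- by move=> k _ /imsetP [x _ ->]; apply/imsetP; exists (scalef k x); rewrite ?gmulZr.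
Qed.

Lemma sum_convolution (g : gT) (F : gT -> gT -> K) :
  \sum_(h : gT) F h (h^-1 * g)%g = \sum_(y : gT) F (g * y^-1)%g y.
Proof.
rewrite (reindex (fun y : gT => g * y^-1)%g); last first.
  by exists (fun h => h^-1 * g)%g => h _; rewrite invMg invgK ?mulgKV ?mulKVg.
by apply: eq_bigr => y _; rewrite invMg invgK mulgKV.
Qed.

Lemma gform_gmul a u x : gform a (gmul u x) = gform (gmul (ginv u) a) x.
Proof.
rewrite /gform /gmul.
transitivity (\sum_(g : gT) \sum_(y : gT) a g * u (g * y^-1)%g * x y).
  apply: eq_bigr => g _.
  rewrite ffunE (sum_convolution g (fun h y : gT => u h * x y)) mulr_sumr.
  by apply: eq_bigr => y _; rewrite mulrA.
rewrite exchange_big; apply: eq_bigr => y _.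
rewrite ffunE (sum_convolution y (fun h z : gT => ginv u h * a z)) mulr_suml.
by apply: eq_bigr => g _; rewrite ffunE invMg invgK [a g * _]mulrC.
Qed.

Lemma gform_delta b (y : gT) : gform b (delta y) = b y.
Proof.
rewrite /gform (bigD1 y) //= big1 ?addr0; first by rewrite ffunE eqxx mulr1.
by move=> z /negbTE neq_zy; rewrite ffunE neq_zy mulr0.
Qed.

Lemma perp_principal u : perp (principal u) = annihilator (ginv u).
Proof.
apply/setP => a; rewrite !inE; apply/forall_inP/eqP => [perp_a | ann_a].
  apply/ffunP => y; rewrite [RHS]ffunE -(gform_delta (gmul (ginv u) a) y) -gform_gmul.
  by apply/eqP/perp_a/imsetP; exists (delta y).
move=> _ /imsetP [x _ ->]; rewrite gform_gmul ann_a.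
by apply/eqP/big1 => y _; rewrite ffunE mul0r.
Qed.

Definition coords a : 'rV[K]_#|gT| := \row_i a (enum_val i).
Definition of_coords (r : 'rV[K]_#|gT|) : {ffun gT -> K} :=
  [ffun g => r 0 (enum_rank g)].

Lemma coordsK : cancel coords of_coords.
Proof. by move=> a; apply/ffunP => g; rewrite ffunE mxE enum_rankK. Qed.

Lemma of_coordsK : cancel of_coords coords.
Proof. by move=> r; apply/rowP => i; rewrite mxE ffunE enum_valK. Qed.

Lemma of_coords0 : of_coords 0 = 0.
Proof. by apply/ffunP => g; rewrite !ffunE mxE. Qed.

Lemma of_coordsD r1 r2 : of_coords (r1 + r2) = of_coords r1 + of_coords r2.
Proof. by apply/ffunP => g; rewrite !ffunE mxE. Qed.

Lemma of_coordsZ k r : of_coords (k *: r) = scalef k (of_coords r).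
Proof. by apply/ffunP => g; rewrite !ffunE mxE. Qed.

Lemma gform_coords a b : gform a b = (coords a *m (coords b)^T) 0 0.
Proof.
rewrite mxE /gform (reindex (@enum_val gT gT)) /=; last first.
  exact: onW_bij (enum_val_bij gT).
by apply: eq_bigr => i _; rewrite !mxE.
Qed.

Definition represents m (A : 'M[K]_(m, #|gT|)) (W : {set {ffun gT -> K}}) :=
  forall a, (a \in W) = (coords a <= A)%MS.

Definition elements_mx (W : {set {ffun gT -> K}}) :
  'M[K]_(#|{ffun gT -> K}|, #|gT|) :=
  \matrix_i coords (if enum_val i \in W then enum_val i else 0).

Lemma row_elements_mx (W : {set {ffun gT -> K}}) i :
  row i (elements_mx W) = coords (if enum_val i \in W then enum_val i else 0).
Proof. by apply/rowP => j; rewrite !mxE. Qed.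

Lemma subspace_represented (W : {set {ffun gT -> K}}) :
  is_subspace W -> represents (elements_mx W) W.
Proof.
case=> W0 WD WZ; have rowA := row_elements_mx W; set A := elements_mx W.
have rows_in_W i : of_coords (row i A) \in W by rewrite rowA coordsK; case: ifP.
move=> a; apply/idP/idP => [Wa | /submxP [D coords_a]].
  by have := row_sub (enum_rank a) A; rewrite rowA enum_rankK Wa.
rewrite -[a]coordsK coords_a mulmx_sum_row.
apply: (big_ind (fun r => of_coords r \in W)) => [|r1 r2|i _].
- by rewrite of_coords0.
- by rewrite of_coordsD; exact: WD.
- by rewrite of_coordsZ; apply/WZ/rows_in_W.
Qed.

Lemma perp_represented m (A : 'M[K]_(m, #|gT|)) (W : {set {ffun gT -> K}}) :
  represents A W -> represents (kermx A^T) (perp W).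
Proof.
move=> reprA a; rewrite inE sub_kermx; apply/forall_inP/eqP => [perp_a | ker_a].
  apply/rowP => j; rewrite [RHS]mxE.
  have W_row : of_coords (row j A) \in W by rewrite reprA of_coordsK row_sub.
  rewrite -[RHS](eqP (perp_a _ W_row)) gform_coords of_coordsK !mxE.
  by apply: eq_bigr => i _; rewrite !mxE.
move=> c; rewrite reprA => /submxP [D coords_c].
by rewrite gform_coords coords_c trmx_mul mulmxA ker_a mul0mx mxE.
Qed.

Lemma perp_perp (W : {set {ffun gT -> K}}) : is_subspace W -> perp (perp W) = W.
Proof.
move=> /subspace_represented reprW; apply/setP => b.
rewrite (perp_represented (perp_represented reprW)) reprW.
by rewrite -(eqmxP (double_kermx_tr _)).
Qed.

End GroupAlgebra.

(* C = ann v  iff  C = perp (v* KG), and both sides of the equivalence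
   are then transported by the double-orthogonal law. *)
Theorem mainTheorem3 (K : finFieldType) (gT : finGroupType)
  (C : {set {ffun gT -> K}}) :
  is_right_ideal C -> (checkable C <-> principal_right_ideal (perp C)).
Proof.
move=> idealC; split=> [[v C_ann] | [u perpC_principal]].
- exists (ginv v); rewrite -/(principal (ginv v)).
  have -> : C = perp (principal (ginv v)) by rewrite perp_principal ginvK C_ann.
  exact/perp_perp/principal_subspace.
- have perpC : perp C = principal u := perpC_principal.
  exists (ginv u); rewrite -/(annihilator (ginv u)) -perp_principal -perpC.
  by rewrite perp_perp //; apply: right_ideal_subspace.
Qed.
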